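(* Let $\mathrm{CNF}$, $\mathrm{cps}$ and the translations ($V^{\sim}$, $M^{\wr}$, $M^{-}$) and ($P^{+}$, $M^{\times}$, $V^{\times\times}$) be as in the context. Then $\mathrm{CNF}\cong\mathrm{cps}$, namely: (1) for all terms $M$ and values $V$ of $\mathrm{CNF}$, $(M^{-})^{+}=M$, $(M^{\wr})^{\times}=M$ and $(V^{\sim})^{\times\times}=V$; (2) for all terms $P$, commands $M$ and values $V$ of $\mathrm{cps}$, $(P^{+})^{-}=P$, $(M^{\times})^{\wr}=M$ and $(V^{\times\times})^{\sim}=V$; (3) if $M_1\to M_2$ in $\mathrm{CNF}$ then $M_1^{\wr}\to M_2^{\wr}$ in $\mathrm{cps}$ (hence $M_1^{-}\to M_2^{-}$ in $\mathrm{cps}$); (4) if $M_1\to M_2$ for commands in $\mathrm{cps}$ then $M_1^{\times}\to M_2^{\times}$ in $\mathrm{CNF}$; hence if $P_1\to P_2$ for terms in $\mathrm{cps}$ then $P_1^{+}\to P_2^{+}$ in $\mathrm{CNF}$.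
   Context: Terms are considered up to $\alpha$-conversion; $[V/x]$ is capture-avoiding substitution; $\to$ is one-step reduction (closure of the listed rule under all constructors). $\mathrm{CNF}$: terms $M::=V\mid V(W,x.M)$ ($x$ bound in $M$), values $V,W::=x\mid\lambda x.M$. Left substitution: $\langle V\backslash x\rangle P=[V/x]P$, $\langle V(W,y.N)\backslash x\rangle P=V(W,y.\langle N\backslash x\rangle P)$. Rule: $(\beta_v)$ $(\lambda y.M)(W,x.P)\to\langle [W/y]M\backslash x\rangle P$. $\mathrm{cps}$ (with a fixed distinguished covariable $k$): commands $M,N::=kV\mid VW(\lambda x.N)$; values $V,W::=x\mid\lambda x.P$; terms $P::=\lambda k.M$ (application associates to the left). The substitution $[\lambda x.N/k]M$ is defined homomorphically except for the clause $[\lambda x.N/k](kV)=[V/x]N$. Rule: $(\beta_v)$ $(\lambda y.\lambda k.M)W(\lambda x.N)\to[\lambda x.N/k][W/y]M$. Translation from $\mathrm{CNF}$ to $\mathrm{cps}$: $x^{\sim}=x$; $(\lambda x.M)^{\sim}=\lambda x.M^{-}$; $M^{-}=\lambda k.M^{\wr}$; $V^{\wr}=kV^{\sim}$; $(V(W,x.M))^{\wr}=V^{\sim}W^{\sim}(\lambda x.M^{\wr})$. Inverse: $x^{\times\times}=x$; $(\lambda x.P)^{\times\times}=\lambda x.P^{+}$; $(\lambda k.M)^{+}=M^{\times}$; $(kV)^{\times}=V^{\times\times}$; $(VW(\lambda x.M))^{\times}=V^{\times\times}(W^{\times\times},x.M^{\times})$. *)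

(* Syntax with binders represented by de Bruijn indices,
   so that terms are identified up to alpha-conversion. *)

Definition scons {A : Type} (a : A) (f : nat -> A) (n : nat) : A :=
  match n with 0 => a | S m => f m end.

Definition upren (r : nat -> nat) : nat -> nat := scons 0 (fun n => S (r n)).

Inductive ctm : Type :=
| CVal : cval -> ctm
| CApp : cval -> cval -> ctm -> ctm        (* V(W, x.M), x bound (index 0) in M *)
with cval : Type :=
| CVar : nat -> cval
| CLam : ctm -> cval.

Fixpoint cren_v (r : nat -> nat) (V : cval) : cval :=
  match V with
  | CVar n => CVar (r n)
  | CLam M => CLam (cren_t (upren r) M)
  end
with cren_t (r : nat -> nat) (M : ctm) : ctm :=
  match M with
  | CVal V => CVal (cren_v r V)
  | CApp V W N => CApp (cren_v r V) (cren_v r W) (cren_t (upren r) N)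
  end.

Definition cup (s : nat -> cval) : nat -> cval :=
  scons (CVar 0) (fun n => cren_v S (s n)).

Fixpoint csub_v (s : nat -> cval) (V : cval) : cval :=
  match V with
  | CVar n => s n
  | CLam M => CLam (csub_t (cup s) M)
  end
with csub_t (s : nat -> cval) (M : ctm) : ctm :=
  match M with
  | CVal V => CVal (csub_v s V)
  | CApp V W N => CApp (csub_v s V) (csub_v s W) (csub_t (cup s) N)
  end.

(* left substitution <M \ x> P, where x is index 0 of P *)
Fixpoint lsub (M P : ctm) : ctm :=
  match M with
  | CVal V => csub_t (scons V CVar) P
  | CApp V W N => CApp V W (lsub N (cren_t (upren S) P))
  end.

Inductive cstep_t : ctm -> ctm -> Prop :=
| cbeta : forall M W P,
    cstep_t (CApp (CLam M) W P) (lsub (csub_t (scons W CVar) M) P)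
| cstep_val : forall V V', cstep_v V V' -> cstep_t (CVal V) (CVal V')
| cstep_app1 : forall V V' W M, cstep_v V V' -> cstep_t (CApp V W M) (CApp V' W M)
| cstep_app2 : forall V W W' M, cstep_v W W' -> cstep_t (CApp V W M) (CApp V W' M)
| cstep_app3 : forall V W M M', cstep_t M M' -> cstep_t (CApp V W M) (CApp V W M')
with cstep_v : cval -> cval -> Prop :=
| cstep_lam : forall M M', cstep_t M M' -> cstep_v (CLam M) (CLam M').

Inductive pcmd : Type :=
| PRet : pval -> pcmd                      (* k V *)
| PApp : pval -> pval -> pcmd -> pcmd      (* V W (\x.N), x bound (index 0) in N *)
with pval : Type :=
| PVar : nat -> pval
| PLam : pterm -> pval
with pterm : Type :=
| PK : pcmd -> pterm.                      (* \k.M, binds the distinguished k *)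

Fixpoint pren_c (r : nat -> nat) (M : pcmd) : pcmd :=
  match M with
  | PRet V => PRet (pren_v r V)
  | PApp V W N => PApp (pren_v r V) (pren_v r W) (pren_c (upren r) N)
  end
with pren_v (r : nat -> nat) (V : pval) : pval :=
  match V with
  | PVar n => PVar (r n)
  | PLam P => PLam (pren_p (upren r) P)
  end
with pren_p (r : nat -> nat) (P : pterm) : pterm :=
  match P with
  | PK M => PK (pren_c r M)
  end.

Definition pup (s : nat -> pval) : nat -> pval :=
  scons (PVar 0) (fun n => pren_v S (s n)).

Fixpoint psub_c (s : nat -> pval) (M : pcmd) : pcmd :=
  match M with
  | PRet V => PRet (psub_v s V)
  | PApp V W N => PApp (psub_v s V) (psub_v s W) (psub_c (pup s) N)
  end
with psub_v (s : nat -> pval) (V : pval) : pval :=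
  match V with
  | PVar n => s n
  | PLam P => PLam (psub_p (pup s) P)
  end
with psub_p (s : nat -> pval) (P : pterm) : pterm :=
  match P with
  | PK M => PK (psub_c s M)
  end.

(* [\x.N / k] M : homomorphic, except [\x.N/k](kV) = [V/x]N.  The
   occurrences of k inside values are bound by an inner \k, hence untouched;
   N (with x = index 0) is weakened when going under a binder. *)
Fixpoint ksub (N M : pcmd) : pcmd :=
  match M with
  | PRet V => psub_c (scons V PVar) N
  | PApp V W M' => PApp V W (ksub (pren_c (upren S) N) M')
  end.

Inductive pstep_c : pcmd -> pcmd -> Prop :=
| pbeta : forall M W N,
    pstep_c (PApp (PLam (PK M)) W N) (ksub N (psub_c (scons W PVar) M))
| pstep_ret : forall V V', pstep_v V V' -> pstep_c (PRet V) (PRet V')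
| pstep_app1 : forall V V' W N, pstep_v V V' -> pstep_c (PApp V W N) (PApp V' W N)
| pstep_app2 : forall V W W' N, pstep_v W W' -> pstep_c (PApp V W N) (PApp V W' N)
| pstep_app3 : forall V W N N', pstep_c N N' -> pstep_c (PApp V W N) (PApp V W N')
with pstep_v : pval -> pval -> Prop :=
| pstep_lam : forall P P', pstep_p P P' -> pstep_v (PLam P) (PLam P')
with pstep_p : pterm -> pterm -> Prop :=
| pstep_k : forall M M', pstep_c M M' -> pstep_p (PK M) (PK M').

(* CNF -> cps : V^~ , M^- , M^wr *)
Fixpoint tr_v (V : cval) : pval :=
  match V with
  | CVar n => PVar n
  | CLam M => PLam (PK (tr_c M))
  end
with tr_c (M : ctm) : pcmd :=
  match M with
  | CVal V => PRet (tr_v V)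
  | CApp V W N => PApp (tr_v V) (tr_v W) (tr_c N)
  end.

Definition tr_t (M : ctm) : pterm := PK (tr_c M).   (* M^- = \k. M^wr *)

(* cps -> CNF : V^xx , P^+ , M^x *)
Fixpoint bk_c (M : pcmd) : ctm :=
  match M with
  | PRet V => CVal (bk_v V)
  | PApp V W N => CApp (bk_v V) (bk_v W) (bk_c N)
  end
with bk_v (V : pval) : cval :=
  match V with
  | PVar n => CVar n
  | PLam P => CLam (bk_p P)
  end
with bk_p (P : pterm) : ctm :=
  match P with
  | PK M => bk_c M
  end.

(* The two grammars correspond constructor by constructor (k V to V, V W (\x.N) to
   V(W, x.N), \k.M to M), so the translations are mutually inverse.  The forward
   translation commutes with renaming and value substitution, and it turns left
   substitution <M \ x> P into [\x.P / k] M, so it sends each beta_v redex and its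
   contractum to a beta_v redex and its contractum.  Conjugating by the inverse
   gives the same facts for the backward translation. *)


Scheme ctm_ind2 := Induction for ctm Sort Prop
with cval_ind2 := Induction for cval Sort Prop.
Combined Scheme ctm_cval_ind from ctm_ind2, cval_ind2.

Scheme pcmd_ind2 := Induction for pcmd Sort Prop
with pval_ind2 := Induction for pval Sort Prop
with pterm_ind2 := Induction for pterm Sort Prop.
Combined Scheme pcmd_pval_pterm_ind from pcmd_ind2, pval_ind2, pterm_ind2.

Scheme cstep_t_ind2 := Induction for cstep_t Sort Prop
with cstep_v_ind2 := Induction for cstep_v Sort Prop.
Combined Scheme cstep_ind from cstep_t_ind2, cstep_v_ind2.

Scheme pstep_c_ind2 := Induction for pstep_c Sort Prop
with pstep_v_ind2 := Induction for pstep_v Sort Prop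
with pstep_p_ind2 := Induction for pstep_p Sort Prop.
Combined Scheme pstep_ind from pstep_c_ind2, pstep_v_ind2, pstep_p_ind2.

Lemma bk_tr : (forall M, bk_c (tr_c M) = M) /\ (forall V, bk_v (tr_v V) = V).
Proof. apply ctm_cval_ind; intros; simpl; congruence. Qed.

Lemma tr_bk : (forall M, tr_c (bk_c M) = M) /\ (forall V, tr_v (bk_v V) = V) /\
              (forall P, tr_t (bk_p P) = P).
Proof. apply pcmd_pval_pterm_ind; intros; simpl in *; unfold tr_t in *; congruence. Qed.

Lemma tr_ren : (forall M r, tr_c (cren_t r M) = pren_c r (tr_c M)) /\
               (forall V r, tr_v (cren_v r V) = pren_v r (tr_v V)).
Proof. apply ctm_cval_ind; intros; simpl; congruence. Qed.

Lemma tr_cup s s' :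
  (forall n, tr_v (s n) = s' n) -> forall n, tr_v (cup s n) = pup s' n.
Proof.
  intros Hs [|n]; simpl; [reflexivity|].
  rewrite (proj2 tr_ren), Hs; reflexivity.
Qed.

Lemma tr_sub :
  (forall M s s', (forall n, tr_v (s n) = s' n) ->
     tr_c (csub_t s M) = psub_c s' (tr_c M)) /\
  (forall V s s', (forall n, tr_v (s n) = s' n) ->
     tr_v (csub_v s V) = psub_v s' (tr_v V)).
Proof.
  apply ctm_cval_ind; intros; simpl; auto.
  - f_equal; auto.
  - f_equal; auto using tr_cup.
  - do 3 f_equal; auto using tr_cup.
Qed.

Lemma tr_sub1 M W :
  tr_c (csub_t (scons W CVar) M) = psub_c (scons (tr_v W) PVar) (tr_c M).
Proof. apply (proj1 tr_sub); intros [|n]; reflexivity. Qed.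

Lemma tr_lsub M P : tr_c (lsub M P) = ksub (tr_c P) (tr_c M).
Proof.
  revert P; induction M as [V|V W M IHM]; intros P; simpl.
  - apply tr_sub1.
  - rewrite IHM, (proj1 tr_ren); reflexivity.
Qed.

Lemma bk_sub1 M W :
  bk_c (psub_c (scons W PVar) M) = csub_t (scons (bk_v W) CVar) (bk_c M).
Proof.
  rewrite <- (proj1 bk_tr (csub_t _ _)), tr_sub1, (proj1 tr_bk), (proj1 (proj2 tr_bk)).
  reflexivity.
Qed.

Lemma bk_ksub N M : bk_c (ksub N M) = lsub (bk_c M) (bk_c N).
Proof.
  rewrite <- (proj1 bk_tr (lsub _ _)), tr_lsub, !(proj1 tr_bk); reflexivity.
Qed.

Lemma tr_step : (forall M1 M2, cstep_t M1 M2 -> pstep_c (tr_c M1) (tr_c M2)) /\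
                (forall V1 V2, cstep_v V1 V2 -> pstep_v (tr_v V1) (tr_v V2)).
Proof.
  apply cstep_ind; intros; simpl; try (repeat constructor; auto; fail).
  rewrite tr_lsub, tr_sub1; constructor.
Qed.

Lemma bk_step : (forall M1 M2, pstep_c M1 M2 -> cstep_t (bk_c M1) (bk_c M2)) /\
                (forall V1 V2, pstep_v V1 V2 -> cstep_v (bk_v V1) (bk_v V2)) /\
                (forall P1 P2, pstep_p P1 P2 -> cstep_t (bk_p P1) (bk_p P2)).
Proof.
  apply pstep_ind; intros; simpl; auto; try (constructor; auto; fail).
  rewrite bk_ksub, bk_sub1; constructor.
Qed.

Theorem theorem5 :
  (* (1) *)
  ((forall M : ctm, bk_p (tr_t M) = M /\ bk_c (tr_c M) = M) /\
   (forall V : cval, bk_v (tr_v V) = V)) /\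
  (* (2) *)
  ((forall P : pterm, tr_t (bk_p P) = P) /\
   (forall M : pcmd, tr_c (bk_c M) = M) /\
   (forall V : pval, tr_v (bk_v V) = V)) /\
  (* (3) *)
  (forall M1 M2 : ctm, cstep_t M1 M2 ->
     pstep_c (tr_c M1) (tr_c M2) /\ pstep_p (tr_t M1) (tr_t M2)) /\
  (* (4) *)
  ((forall M1 M2 : pcmd, pstep_c M1 M2 -> cstep_t (bk_c M1) (bk_c M2)) /\
   (forall P1 P2 : pterm, pstep_p P1 P2 -> cstep_t (bk_p P1) (bk_p P2))).
Proof.
  destruct bk_tr as [bk_tr_c bk_tr_v].
  destruct tr_bk as [tr_bk_c [tr_bk_v tr_bk_p]].
  destruct tr_step as [tr_step_c _].
  destruct bk_step as [bk_step_c [_ bk_step_p]].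
  split; [|split; [|split]].
  - split; [intros M; exact (conj (bk_tr_c M) (bk_tr_c M))|exact bk_tr_v].
  - auto.
  - intros M1 M2 Hstep; split; [|constructor]; auto.
  - auto.
Qed.
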